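(* Let $p, p' > 1$ be real numbers with $\frac{1}{p}+\frac{1}{p'}=1$, let $\mu,\nu$ be probability distributions on $S$ with $\nu(s)>0$ for all $s\in S$, and let $\rho$ be a probability distribution on $\{1,\dots,N\}$. Then for every joint stationary strategy $\boldsymbol{\pi}=(\pi^1,\dots,\pi^N)$ and every tuple of functions $(v^1,\dots,v^N)$ with $v^i:S\to\mathbb{R}$, $$\Big(\sum_{i=1}^N \rho(i)\,\big\|v^{*i}_{\boldsymbol{\pi}^{-i}} - v^i_{\boldsymbol{\pi}}\big\|_{\mu,p}^p\Big)^{1/p} \le \frac{2^{1/p'}\, C_\infty(\mu,\nu)^{1/p}}{1-\gamma}\left[\sum_{i=1}^N \rho(i)\Big(\big\|\mathcal{T}^{*i}_{\boldsymbol{\pi}^{-i}} v^i - v^i\big\|_{\nu,p}^p + \big\|\mathcal{T}^i_{\boldsymbol{\pi}} v^i - v^i\big\|_{\nu,p}^p\Big)\right]^{1/p}.$$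
   Context: An $N$-player Markov game has a finite state space $S$, finite nonempty action sets $A^i(s)$ for each player $i\in\{1,\dots,N\}$ and state $s$, rewards $r^i(s,\mathbf a)\in\mathbb{R}$ for joint actions $\mathbf a=(a^1,\dots,a^N)$, a transition kernel $p(s'|s,\mathbf a)$, and a discount factor $\gamma\in[0,1)$. We write $\mathbf a=(a^i,\mathbf a^{-i})$ where $\mathbf a^{-i}$ is the joint action of all players other than $i$. A stationary strategy $\pi^i$ of player $i$ assigns to each $s$ a probability distribution $\pi^i(\cdot|s)$ on $A^i(s)$; a joint strategy is $\boldsymbol\pi=(\pi^1,\dots,\pi^N)=(\pi^i,\boldsymbol\pi^{-i})$, with actions drawn independently across players. Define $\mathcal P_{\boldsymbol\pi}(s'|s)=E_{\mathbf a\sim\boldsymbol\pi(\cdot|s)}[p(s'|s,\mathbf a)]$, $r^i_{\boldsymbol\pi}(s)=E_{\mathbf a\sim\boldsymbol\pi(\cdot|s)}[r^i(s,\mathbf a)]$, $\mathcal P_{\boldsymbol\pi^{-i}}(s'|s,a^i)=E_{\mathbf a^{-i}\sim\boldsymbol\pi^{-i}(\cdot|s)}[p(s'|s,a^i,\mathbf a^{-i})]$, $r^i_{\boldsymbol\pi^{-i}}(s,a^i)=E_{\mathbf a^{-i}\sim\boldsymbol\pi^{-i}(\cdot|s)}[r^i(s,a^i,\mathbf a^{-i})]$. The value of $\boldsymbol\pi$ for player $i$ is $v^i_{\boldsymbol\pi}=(\mathcal I-\gamma\mathcal P_{\boldsymbol\pi})^{-1}r^i_{\boldsymbol\pi}$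 (vectors/matrices indexed by $S$, $\mathcal I$ the identity). The best-response value is $v^{*i}_{\boldsymbol\pi^{-i}}=\max_{\tilde\pi^i} v^i_{\tilde\pi^i,\boldsymbol\pi^{-i}}$ (pointwise maximum over stationary strategies of player $i$). For $v:S\to\mathbb R$, the Bellman operators are $\mathcal T^i_{\boldsymbol\pi}v(s)=r^i_{\boldsymbol\pi}(s)+\gamma\sum_{s'}\mathcal P_{\boldsymbol\pi}(s'|s)v(s')$ and $\mathcal T^{*i}_{\boldsymbol\pi^{-i}}v(s)=\max_{a^i\in A^i(s)}\big[r^i_{\boldsymbol\pi^{-i}}(s,a^i)+\gamma\sum_{s'}\mathcal P_{\boldsymbol\pi^{-i}}(s'|s,a^i)v(s')\big]$. For a distribution $\mu$ on $S$ and $f:S\to\mathbb R$, $\|f\|_{\mu,p}=(\sum_{s}\mu(s)|f(s)|^p)^{1/p}$. The concentrability coefficient of a joint strategy $\boldsymbol\pi$ is $C_\infty(\mu,\nu,\boldsymbol\pi)=\max_{s\in S}\frac{[(1-\gamma)\mu^T(\mathcal I-\gamma\mathcal P_{\boldsymbol\pi})^{-1}](s)}{\nu(s)}$ (the sup-norm of the Radon–Nikodym derivative of the distribution $(1-\gamma)\mu^T(\mathcal I-\gamma\mathcal P_{\boldsymbol\pi})^{-1}$ with respect to $\nu$), and $C_\infty(\mu,\nu)=\sup_{\boldsymbol\pi}C_\infty(\mu,\nu,\boldsymbol\pi)$, the supremum over all joint stationary strategies. *)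

From Stdlib Require Import Reals ClassicalEpsilon.
From mathcomp Require Import all_boot.
Set Implicit Arguments. Unset Strict Implicit. Unset Printing Implicit Defensive.
Local Open Scope R_scope.

Definition rsum (T : finType) (f : T -> R) : R := \big[Rplus/0]_(t : T) f t.

(* x^y for x >= 0, y > 0 with the convention 0^y = 0
   (Stdlib's Rpower 0 y = 1, which is not the intended value). *)
Definition rpow (x y : R) : R := if Rle_dec x 0 then 0 else Rpower x y.

Definition Rsup (E : R -> Prop) : R := epsilon (inhabits 0) (fun x => is_lub E x).

Definition delta (T : finType) (x y : T) : R := if x == y then 1 else 0.
Definition minv (T : finType) (M : T -> T -> R) : T -> T -> R :=
  epsilon (inhabits (fun _ _ => 0)) (fun B : T -> T -> R =>
    (forall x y, rsum (fun z => M x z * B z y) = delta x y) /\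
    (forall x y, rsum (fun z => B x z * M z y) = delta x y)).

Definition is_distr (T : finType) (d : T -> R) : Prop :=
  (forall t, 0 <= d t) /\ rsum d = 1.

Section Game.
Variables (N : nat) (S : finType) (A : 'I_N -> S -> finType).

Definition joint (s : S) : finType := {dffun forall i : 'I_N, A i s}.

Unset Implicit Arguments.
Record game := Game {
  rew : 'I_N -> forall s : S, joint s -> R;
  trans : forall s : S, joint s -> S -> R;
  discount : R
}.
Set Implicit Arguments.

Definition valid_game (G : game) : Prop :=
  (forall i s, 0 < #|A i s|)%N /\
  (forall (s : S) (a : joint s), is_distr (trans G s a)) /\
  0 <= discount G < 1.

Definition strategy (i : 'I_N) := forall s : S, A i s -> R.
Definition is_strategy i (sg : strategy i) := forall s, is_distr (sg s).
Definition jstrategy := forall i : 'I_N, strategy i.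
Definition is_jstrategy (pi : jstrategy) := forall i, is_strategy (pi i).

Definition jprob (pi : jstrategy) (s : S) (a : joint s) : R :=
  \big[Rmult/1]_(i : 'I_N) pi i s (a i).
Definition devprob (pi : jstrategy) (i : 'I_N) (sg : strategy i) (s : S) (a : joint s) : R :=
  sg s (a i) * \big[Rmult/1]_(j : 'I_N | j != i) pi j s (a j).

Variable G : game.

Definition Pq (q : forall s, joint s -> R) (s s' : S) : R :=
  rsum (fun a : joint s => q s a * trans G s a s').
Definition rq (q : forall s, joint s -> R) (i : 'I_N) (s : S) : R :=
  rsum (fun a : joint s => q s a * rew G i s a).
Definition resolvent (q : forall s, joint s -> R) : S -> S -> R :=
  minv (fun x y => delta x y - discount G * Pq q x y).
Definition valueq (q : forall s, joint s -> R) (i : 'I_N) (s : S) : R :=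
  rsum (fun s' => resolvent q s s' * rq q i s').

Definition value (pi : jstrategy) (i : 'I_N) : S -> R := valueq (jprob pi) i.
Definition brvalue (pi : jstrategy) (i : 'I_N) (s : S) : R :=
  Rsup (fun x => exists sg : strategy i, is_strategy sg /\ x = valueq (devprob pi sg) i s).

Definition rdev (pi : jstrategy) (i : 'I_N) (s : S) (ai : A i s) : R :=
  rsum (fun a : joint s => if a i == ai then
          (\big[Rmult/1]_(j : 'I_N | j != i) pi j s (a j)) * rew G i s a else 0).
Definition Pdev (pi : jstrategy) (i : 'I_N) (s : S) (ai : A i s) (s' : S) : R :=
  rsum (fun a : joint s => if a i == ai then
          (\big[Rmult/1]_(j : 'I_N | j != i) pi j s (a j)) * trans G s a s' else 0).

Definition bellman (pi : jstrategy) (i : 'I_N) (v : S -> R) (s : S) : R :=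
  rq (jprob pi) i s + discount G * rsum (fun s' => Pq (jprob pi) s s' * v s').
Definition bellman_star (pi : jstrategy) (i : 'I_N) (v : S -> R) (s : S) : R :=
  Rsup (fun x => exists ai : A i s,
          x = rdev pi ai + discount G * rsum (fun s' => Pdev pi ai s' * v s')).

Definition Cinf_pi (mu nu : S -> R) (pi : jstrategy) : R :=
  \big[Rmax/0]_(s : S)
    ((1 - discount G) * rsum (fun s0 => mu s0 * resolvent (jprob pi) s0 s) / nu s).
Definition Cinf (mu nu : S -> R) : R :=
  Rsup (fun x => exists pi, is_jstrategy pi /\ x = Cinf_pi mu nu pi).

End Game.
Arguments rew {N S A} g i s a.
Arguments trans {N S A} g s a s'.
Arguments discount {N S A} g.

Definition pnorm (S : finType) (mu : S -> R) (p : R) (f : S -> R) : R :=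
  rpow (rsum (fun s => mu s * rpow (Rabs (f s)) p)) (1 / p).

(* Policy improvement over the finitely many deterministic
   strategies shows that the best-response value is the value v_d of a
   deterministic strategy d, so that
     v^{*i} - v^i_pi = (v_d - v) + (v - v^i_pi).
   Each term is a resolvent (I - gamma P)^{-1} -- nonnegative, with row sums
   1/(1 - gamma) -- applied to a Bellman residual, bounded by |T^* v - v| and
   |T v - v| respectively.  Jensen's inequality for the rows of the resolvent
   and the concentrability coefficient give
     ||(I - gamma P)^{-1} g||_{mu,p}^p <= C/(1 - gamma)^p ||g||_{nu,p}^p,
   and (a + b)^p <= 2^(p-1) (a^p + b^p) combines the two terms.  Averaging over
   the players with rho and taking p-th roots yields the bound. *)

From Stdlib Require Import Reals Lra ClassicalEpsilon FunctionalExtensionality.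
From mathcomp Require Import all_boot all_algebra.
From mathcomp Require Import Rstruct.
Set Implicit Arguments. Unset Strict Implicit.
Set Warnings "-notation-overridden,-ambiguous-paths".
Local Open Scope R_scope.

Section FiniteSums.
Variable T : finType.
Implicit Types f g : T -> R.

Lemma eq_rsum f g : (forall t, f t = g t) -> rsum f = rsum g.
Proof. by move=> fg; apply: eq_bigr => t _. Qed.

Lemma rsumD f g : rsum (fun t => f t + g t) = rsum f + rsum g.
Proof. exact: big_split. Qed.

Lemma rsum_distrr c f : rsum (fun t => c * f t) = c * rsum f.
Proof. by rewrite /rsum big_distrr. Qed.

Lemma rsum_distrl c f : rsum (fun t => f t * c) = rsum f * c.
Proof. by rewrite /rsum big_distrl. Qed.

Lemma rsumN f : rsum (fun t => - f t) = - rsum f.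
Proof.
by rewrite -(@eq_rsum (fun t => -1 * f t)) ?rsum_distrr => [|t]; ring.
Qed.

Lemma rsumB f g : rsum (fun t => f t - g t) = rsum f - rsum g.
Proof. by rewrite /Rminus rsumD rsumN. Qed.

Lemma rsum0 : rsum (fun _ : T => 0) = 0.
Proof. exact: big1. Qed.

Lemma ler_rsum f g : (forall t, f t <= g t) -> rsum f <= rsum g.
Proof. by move=> fg; rewrite /rsum; elim/big_ind2: _ => // *; lra. Qed.

Lemma rsum_ge0 f : (forall t, 0 <= f t) -> 0 <= rsum f.
Proof. by move=> f0; have := @ler_rsum (fun _ => 0) f f0; rewrite rsum0. Qed.

Lemma rsum_ge_term f t : (forall t, 0 <= f t) -> f t <= rsum f.
Proof.
move=> f0; rewrite /rsum (bigD1 t) //=.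
have : 0 <= \big[Rplus/0]_(u | u != t) f u by elim/big_ind: _ => // *; lra.
lra.
Qed.

Lemma rsum_deltal f t0 : rsum (fun t => delta t0 t * f t) = f t0.
Proof.
rewrite /rsum (bigD1 t0) //= big1 /delta ?eqxx => [|t /negPf]; last first.
  by rewrite eq_sym => ->; ring.
simpl; ring.
Qed.

Lemma rsum_deltar f t0 : rsum (fun t => f t * delta t t0) = f t0.
Proof.
by rewrite -(rsum_deltal f t0); apply: eq_rsum => t; rewrite /delta eq_sym; ring.
Qed.

Lemma rsum_avg_le (w F : T -> R) c : is_distr w -> (forall t, F t <= c) ->
  rsum (fun t => w t * F t) <= c.
Proof.
move=> [w0 w1] Fc; apply: Rle_trans (@ler_rsum _ (fun t => w t * c) _) _.
  by move=> t; apply: Rmult_le_compat_l.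
by rewrite rsum_distrl w1; lra.
Qed.

Lemma ex_argmax f (t0 : T) : exists m, forall t, f t <= f m.
Proof.
case: (order.Order.TotalTheory.arg_maxP f (isT : xpredT t0)) => m _ fm.
by exists m => t; apply/RleP/fm.
Qed.

End FiniteSums.

Lemma exchange_rsum (T U : finType) (F : T -> U -> R) :
  rsum (fun t => rsum (F t)) = rsum (fun u => rsum (F^~ u)).
Proof. exact: exchange_big. Qed.

Lemma bigmax_ge (T : finType) (F : T -> R) t : F t <= \big[Rmax/0]_(s : T) F s.
Proof.
move: (mem_index_enum t); elim: (index_enum T) => // x r IH.
rewrite inE big_cons => /orP [/eqP ->|/IH h]; first exact: Rmax_l.
exact: Rle_trans h (Rmax_r _ _).
Qed.

Lemma bigmax_le (T : finType) (F : T -> R) B : 0 <= B -> (forall t, F t <= B) ->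
  \big[Rmax/0]_(s : T) F s <= B.
Proof. by move=> B0 FB; elim/big_ind: _ => // x y; apply: Rmax_lub. Qed.

Lemma bigmax_ge0 (T : finType) (F : T -> R) : 0 <= \big[Rmax/0]_(s : T) F s.
Proof. by elim/big_rec: _ => [|t x _ x0]; [lra | apply: Rle_trans x0 (Rmax_r _ _)]. Qed.

Lemma Rsup_eq_lub (E : R -> Prop) x : is_lub E x -> Rsup E = x.
Proof.
move=> Ex; have [Eub Elub] := epsilon_spec (inhabits 0) _ (ex_intro _ x Ex).
by case: Ex => ub lub; apply: Rle_antisym; [apply: Elub | apply: lub].
Qed.

Lemma le_Rsup (E : R -> Prop) B x : (forall y, E y -> y <= B) -> E x -> x <= Rsup E.
Proof.
move=> EB Ex; have [l El] := completeness E (ex_intro _ B EB) (ex_intro _ x Ex).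
by rewrite (Rsup_eq_lub El); apply El.
Qed.

Lemma rpowE x y : 0 < x -> rpow x y = Rpower x y.
Proof. by rewrite /rpow; case: Rle_dec => //= *; lra. Qed.

Lemma rpow0 y : rpow 0 y = 0.
Proof. by rewrite /rpow; case: Rle_dec => //= *; lra. Qed.

Lemma rpow_gt0 x y : 0 < x -> 0 < rpow x y.
Proof. by move=> x0; rewrite rpowE //; apply: exp_pos. Qed.

Lemma rpow_ge0 x y : 0 <= rpow x y.
Proof.
rewrite /rpow; case: Rle_dec => h /=; [lra | left; apply: exp_pos].
Qed.

Lemma rpowM x y z : 0 <= x -> rpow (rpow x y) z = rpow x (y * z).
Proof.
case=> [x0|<-]; last by rewrite !rpow0.
by rewrite !rpowE ?Rpower_mult //; apply: exp_pos.
Qed.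

Lemma rpow1 x : 0 <= x -> rpow x 1 = x.
Proof. by case=> [x0|<-]; [rewrite rpowE ?Rpower_1 | rewrite rpow0]. Qed.

Lemma rpowD x y z : 0 <= x -> rpow x (y + z) = rpow x y * rpow x z.
Proof. by case=> [x0|<-]; [rewrite !rpowE ?Rpower_plus | rewrite !rpow0; ring]. Qed.

Lemma rpowMn x y z : 0 <= x -> 0 <= y -> rpow (x * y) z = rpow x z * rpow y z.
Proof.
case=> [x0|<-] [y0|<-]; rewrite ?Rmult_0_l ?Rmult_0_r ?rpow0; try ring.
by rewrite !rpowE ?Rpower_mult_distr //; apply: Rmult_lt_0_compat.
Qed.

Lemma rpow_pred x p : 0 <= x -> rpow x p = rpow x (p - 1) * x.
Proof. by move=> x0; rewrite -{3}(rpow1 x0) -rpowD //; f_equal; ring. Qed.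

Lemma ler_rpow x y c : 0 <= x <= y -> 0 < c -> rpow x c <= rpow y c.
Proof.
move=> [[x0|<-] xy] c0; last by rewrite rpow0; apply: rpow_ge0.
by rewrite !rpowE; try lra; apply: Rle_Rpower_l; lra.
Qed.

Lemma bernoulli_rpow t p : 0 <= t -> 1 <= p -> 1 + p * (t - 1) <= rpow t p.
Proof.
move=> [t0|<-] p1; last by rewrite rpow0; lra.
rewrite rpowE // /Rpower; set d := ln t.
have -> : t = exp d by rewrite /d exp_ln.
have ed := exp_pos d.
have e1 : exp (p * d) = exp d * exp ((p - 1) * d) by rewrite -exp_plus; f_equal; ring.
have e2 : exp d * exp (- d) = 1 by rewrite -exp_plus Rplus_opp_r exp_0.
have h1 : exp d * (1 + (p - 1) * d) <= exp (p * d).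
  by rewrite e1; apply: Rmult_le_compat_l; [lra | apply: exp_ineq1_le].
have h2 : exp d * (1 - d) <= 1.
  rewrite -e2; apply: Rmult_le_compat_l; first lra.
  by have := exp_ineq1_le (- d); lra.
nra.
Qed.

Lemma rpow_tangent x y p : 0 <= x -> 0 < y -> 1 < p ->
  rpow y p + p * rpow y (p - 1) * (x - y) <= rpow x p.
Proof.
move=> x0 y0 p1.
have -> : x = y * (x / y) by field; lra.
have xy0 : 0 <= x / y by apply: Rmult_le_pos; [|apply/Rlt_le/Rinv_0_lt_compat].
rewrite rpowMn ?(@rpow_pred y p) //; try lra.
have := bernoulli_rpow xy0 (Rlt_le _ _ p1).
have := rpow_gt0 (p - 1) y0; have := Rmult_lt_0_compat _ _ (rpow_gt0 (p - 1) y0) y0.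
nra.
Qed.

Lemma rpow_jensen (T : finType) (w g : T -> R) p : 1 < p ->
  (forall t, 0 <= w t) -> (forall t, 0 <= g t) ->
  rpow (rsum (fun t => w t * g t)) p <=
  rpow (rsum w) (p - 1) * rsum (fun t => w t * rpow (g t) p).
Proof.
move=> p1 w0 g0.
have wg0 t : 0 <= w t * g t by apply: Rmult_le_pos.
have wgp0 t : 0 <= w t * rpow (g t) p by apply/Rmult_le_pos/rpow_ge0.
have RHS0 := Rmult_le_pos _ _ (rpow_ge0 (rsum w) (p - 1)) (rsum_ge0 wgp0).
set S1 := rsum (fun t => w t * g t).
have [S1pos|<-] : 0 < S1 \/ 0 = S1 by case: (rsum_ge0 wg0); [left | right].
  2: by rewrite rpow0.
have Wpos : 0 < rsum w.
  case: (rsum_ge0 w0) => // W0; suff : S1 = 0 by lra.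
  have w_eq0 t : w t = 0 by have := rsum_ge_term t w0; have := w0 t; lra.
  by rewrite /S1 -(@rsum0 T); apply: eq_rsum => t; rewrite w_eq0; ring.
set W := rsum w in Wpos *.
set m := S1 / W.
have mpos : 0 < m by apply: Rdiv_lt_0_compat.
have tangent_sum : rsum (fun t => w t * (rpow m p + p * rpow m (p - 1) * (g t - m))) <=
                   rsum (fun t => w t * rpow (g t) p).
  by apply: ler_rsum => t; apply/Rmult_le_compat_l/rpow_tangent.
have tangent_sumE : rsum (fun t => w t * (rpow m p + p * rpow m (p - 1) * (g t - m))) =
                    W * rpow m p + p * rpow m (p - 1) * (S1 - m * W).
  rewrite (@eq_rsum _ _ (fun t => w t * rpow m p + p * rpow m (p - 1) * (w t * g t - m * w t))).
    by rewrite rsumD rsum_distrl rsum_distrr rsumB rsum_distrr.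
  by move=> t; ring.
have S1_mW : S1 - m * W = 0 by rewrite /m; field; lra.
rewrite tangent_sumE S1_mW in tangent_sum.
have -> : S1 = W * m by rewrite /m; field; lra.
rewrite rpowMn; try lra.
rewrite (@rpow_pred W p); last lra.
have := rpow_gt0 (p - 1) Wpos; nra.
Qed.

Lemma rpowD_le a b p : 1 < p -> 0 <= a -> 0 <= b ->
  rpow (a + b) p <= rpow 2 (p - 1) * (rpow a p + rpow b p).
Proof.
move=> p1 a0 b0.
have := @rpow_jensen bool (fun _ => 1) (fun t => if t then a else b) p p1.
rewrite /rsum !big_bool /= !Rmult_1_l (_ : 1 + 1 = 2); last by ring.
by apply=> [_|[]] //; lra.
Qed.

Lemma pnorm_pow (T : finType) (m f : T -> R) p : 0 < p -> (forall t, 0 <= m t) ->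
  rpow (pnorm m p f) p = rsum (fun s => m s * rpow (Rabs (f s)) p).
Proof.
move=> p0 m0; have sum0 : 0 <= rsum (fun s => m s * rpow (Rabs (f s)) p).
  by apply: rsum_ge0 => t; apply/Rmult_le_pos/rpow_ge0.
by rewrite /pnorm rpowM // (_ : 1 / p * p = 1) ?rpow1 //; field; lra.
Qed.

Lemma rpow_conj_bound p p' L C X k : 1 < p -> 1 / p + 1 / p' = 1 ->
  0 <= L -> 0 <= C -> 0 <= X -> 0 <= k ->
  L <= rpow 2 (p - 1) * rpow k p * C * X ->
  rpow L (1 / p) <= rpow 2 (1 / p') * rpow C (1 / p) * k * rpow X (1 / p).
Proof.
move=> p1 pp' L0 C0 X0 k0 LX.
have ip0 : 0 < 1 / p by apply: Rdiv_lt_0_compat; lra.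
have two_p : rpow (rpow 2 (p - 1)) (1 / p) = rpow 2 (1 / p').
  rewrite rpowM; last lra.
  by rewrite (_ : 1 / p' = 1 - 1 / p); [congr rpow; field | ]; lra.
have k_p : rpow (rpow k p) (1 / p) = k.
  by rewrite rpowM // (_ : p * (1 / p) = 1) ?rpow1 //; field; lra.
have n2 := rpow_ge0 2 (p - 1); have nk := rpow_ge0 k p.
have n2k := Rmult_le_pos _ _ n2 nk; have n2kC := Rmult_le_pos _ _ n2k C0.
apply: Rle_trans (ler_rpow (conj L0 LX) ip0) _.
rewrite (rpowMn _ n2kC X0) (rpowMn _ n2k C0) (rpowMn _ n2 nk) two_p k_p.
by right; ring.
Qed.

Lemma sum_ord_rsum (S : finType) (F : 'I_#|S| -> R) :
  \big[Rplus/0]_(k < #|S|) F k = rsum (fun s => F (enum_rank s)).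
Proof. by rewrite /rsum (reindex enum_rank) //; apply/onW_bij/enum_rank_bij. Qed.

Section Resolvent.
Variables (S : finType) (P : S -> S -> R) (gam : R).
Hypothesis P_ge0 : forall x y, 0 <= P x y.
Hypothesis P_sum1 : forall x, rsum (P x) = 1.
Hypothesis gam_range : 0 <= gam < 1.

Definition IgP x y := delta x y - gam * P x y.
Definition IgP_app (f : S -> R) x := f x - gam * rsum (fun y => P x y * f y).

Lemma IgP_appE f x : rsum (fun y => IgP x y * f y) = IgP_app f x.
Proof.
rewrite /IgP /IgP_app (@eq_rsum _ _ (fun y => delta x y * f y + - gam * (P x y * f y))).
  by rewrite rsumD rsum_deltal rsum_distrr; ring.
by move=> y; ring.
Qed.

Lemma IgP_appB f g x : IgP_app (fun y => f y - g y) x = IgP_app f x - IgP_app g x.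
Proof.
rewrite /IgP_app (@eq_rsum _ _ (fun y => P x y * f y - P x y * g y)) ?rsumB => [|y]; ring.
Qed.

(* At a minimiser [m] of [f], [P m] averages values [>= f m],
   so [0 <= IgP_app f m <= (1 - gam) * f m]. *)
Lemma minimum_principle f : (forall x, 0 <= IgP_app f x) -> forall x, 0 <= f x.
Proof.
move=> Hf x0; have [m fm] := ex_argmax (fun x => - f x) x0.
suff : 0 <= f m by have := fm x0; lra.
have Pf : 1 * f m <= rsum (fun y => P m y * f y).
  rewrite -(P_sum1 m) -rsum_distrl; apply: ler_rsum => y.
  by apply: Rmult_le_compat_l => //; have := fm y; lra.
have := Hf m; rewrite /IgP_app; have := Rmult_le_compat_l _ _ _ (proj1 gam_range) Pf.
nra.
Qed.

Lemma IgP_app_eq0 f : (forall x, IgP_app f x = 0) -> forall x, f x = 0.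
Proof.
move=> Hf x; suff : 0 <= f x /\ 0 <= - f x by lra.
split; [apply: (@minimum_principle f) | apply: (@minimum_principle (fun z => - f z))] => y.
  by rewrite Hf; lra.
rewrite /IgP_app (@eq_rsum _ _ (fun z => - (P y z * f z))) ?rsumN => [|z]; last ring.
by have := Hf y; rewrite /IgP_app; lra.
Qed.

Definition mx_of (M : S -> S -> R) : 'M[R]_#|S| :=
  (\matrix_(i, j) M (enum_val i) (enum_val j))%R.

Lemma mx_ofK (M : S -> S -> R) x y : mx_of M (enum_rank x) (enum_rank y) = M x y.
Proof. by rewrite mxE !enum_rankK. Qed.

Lemma mx_of_mulE (M B : S -> S -> R) x y :
  (mx_of M *m mx_of B)%R (enum_rank x) (enum_rank y) = rsum (fun z => M x z * B z y).
Proof. by rewrite mxE sum_ord_rsum; apply: eq_rsum => z; rewrite !mx_ofK. Qed.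

Lemma mx_of1E x y : (1%:M : 'M[R]_#|S|)%R (enum_rank x) (enum_rank y) = delta x y.
Proof. by rewrite mxE (inj_eq enum_rank_inj) /delta; case: eqP. Qed.

Lemma IgP_unit : mx_of IgP \in unitmx.
Proof.
rewrite -unitmx_tr -row_free_unit; apply/inj_row_free => v vM0.
apply/rowP => i; rewrite mxE.
pose f s := v ord0 (enum_rank s).
have IgP_f0 s : IgP_app f s = 0.
  have := congr1 (fun w : 'rV_#|S| => w ord0 (enum_rank s)) vM0.
  rewrite /= !mxE sum_ord_rsum -IgP_appE; apply: eq_trans.
  by apply: eq_rsum => z; rewrite !mxE !enum_rankK Rmult_comm.
by have := IgP_app_eq0 IgP_f0 (enum_val i); rewrite /f enum_valK.
Qed.

Lemma IgP_invertible : exists B : S -> S -> R,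
  (forall x y, rsum (fun z => IgP x z * B z y) = delta x y) /\
  (forall x y, rsum (fun z => B x z * IgP z y) = delta x y).
Proof.
pose B x y := invmx (mx_of IgP) (enum_rank x) (enum_rank y).
have mx_of_B : mx_of B = invmx (mx_of IgP).
  by apply/matrixP => i j; rewrite mxE /B !enum_valK.
exists B; split => x y; rewrite -mx_of_mulE -mx_of1E mx_of_B.
  by rewrite mulmxV // IgP_unit.
by rewrite mulVmx // IgP_unit.
Qed.

Definition res := minv IgP.

Lemma res_spec :
  (forall x y, rsum (fun z => IgP x z * res z y) = delta x y) /\
  (forall x y, rsum (fun z => res x z * IgP z y) = delta x y).
Proof. exact: (epsilon_spec _ _ IgP_invertible). Qed.

Definition res_app (g : S -> R) x := rsum (fun y => res x y * g y).

Lemma IgP_app_res g x : IgP_app (res_app g) x = g x.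
Proof.
rewrite -IgP_appE /res_app.
under eq_rsum => y do rewrite -rsum_distrr.
rewrite exchange_rsum -[RHS](rsum_deltal g x); apply: eq_rsum => z.
by rewrite -(proj1 res_spec) -rsum_distrl; apply: eq_rsum => y; ring.
Qed.

Lemma res_app_IgP f x : res_app (IgP_app f) x = f x.
Proof.
rewrite /res_app.
under eq_rsum => y do rewrite -IgP_appE -rsum_distrr.
rewrite exchange_rsum -[RHS](rsum_deltal f x); apply: eq_rsum => z.
by rewrite -(proj2 res_spec) -rsum_distrl; apply: eq_rsum => y; ring.
Qed.

Lemma res_ge0 x y : 0 <= res x y.
Proof.
apply: (minimum_principle (f := res^~ y)) => z.
by rewrite -IgP_appE (proj1 res_spec) /delta; case: eqP => _; lra.
Qed.

Lemma res_rowsum x : rsum (res x) = / (1 - gam).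
Proof.
have := res_app_IgP (fun _ => 1) x.
rewrite /res_app /IgP_app (@eq_rsum _ _ (fun y => res x y * (1 - gam))).
  by rewrite rsum_distrl => h; apply: (Rmult_eq_reg_r (1 - gam)); rewrite ?h; [field|]; lra.
by move=> y; rewrite (@eq_rsum _ _ (P y)) ?P_sum1 => [|z]; ring.
Qed.

Lemma res_le x y : res x y <= / (1 - gam).
Proof. by rewrite -(res_rowsum x); apply: rsum_ge_term => z; apply: res_ge0. Qed.

Lemma res_app_ge0 g x : (forall y, 0 <= g y) -> 0 <= res_app g x.
Proof. by move=> g0; apply: rsum_ge0 => y; apply/Rmult_le_pos/g0/res_ge0. Qed.

Lemma res_app_le g h x : (forall y, g y <= h y) -> res_app g x <= res_app h x.
Proof. by move=> gh; apply: ler_rsum => y; apply/Rmult_le_compat_l/gh/res_ge0. Qed.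

Lemma res_appN g x : res_app (fun y => - g y) x = - res_app g x.
Proof. by rewrite /res_app -rsumN; apply: eq_rsum => y; ring. Qed.

Lemma res_app_rpow (mu g : S -> R) p : 1 < p -> (forall s, 0 <= mu s) ->
  (forall y, 0 <= g y) ->
  rsum (fun s => mu s * rpow (res_app g s) p) <=
  rpow (/ (1 - gam)) (p - 1) * rsum (fun y => rsum (fun s => mu s * res s y) * rpow (g y) p).
Proof.
move=> p1 mu0 g0.
have jensen_row s : rpow (res_app g s) p <=
    rpow (/ (1 - gam)) (p - 1) * rsum (fun y => res s y * rpow (g y) p).
  by rewrite -(res_rowsum s); apply: rpow_jensen => // y; apply: res_ge0.
apply: Rle_trans (ler_rsum (fun s => Rmult_le_compat_l _ _ _ (mu0 s) (jensen_row s))) _.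
right; under eq_rsum => s do rewrite -rsum_distrr -rsum_distrr.
rewrite exchange_rsum -rsum_distrr; apply: eq_rsum => y.
by rewrite -rsum_distrl -rsum_distrr; apply: eq_rsum => s; ring.
Qed.

End Resolvent.

Lemma sum_prod_dffun (I : finType) (T_ : I -> finType) (f : forall i, T_ i -> R) :
  \big[Rplus/0]_(a : {dffun forall i, T_ i}) \big[Rmult/1]_(i : I) f i (a i) =
  \big[Rmult/1]_(i : I) \big[Rplus/0]_(x : T_ i) f i x.
Proof.
rewrite (reindex (@dffun_of_fprod I T_)) /=; last exact/onW_bij/dffun_of_fprod_bij.
rewrite (eq_bigr (fun t : fprod T_ => \big[Rmult/1]_(i in I) [ffun x => f i x] (t i))); last first.
  by move=> t _; apply: eq_bigr => i _; rewrite !ffunE.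
rewrite big_fprod -(bigA_distr_big_dep _ (fun i j => untag 0 [ffun x => f i x] j)).
apply: eq_bigr => i _; rewrite (eq_bigr (fun x => [ffun x => f i x] x)) => [|x _]; last first.
  by rewrite ffunE.
by rewrite (big_tag (fun i => [ffun x => f i x]) i).
Qed.

Section Game.
Variables (N : nat) (S : finType) (A : 'I_N -> S -> finType) (G : game N S A).
Hypothesis HG : valid_game G.

Let gam_range : 0 <= discount G < 1 := proj2 (proj2 HG).

Definition is_jpolicy (q : forall s, joint A s -> R) := forall s, is_distr (q s).

Lemma Pq_ge0 q : is_jpolicy q -> forall x y, 0 <= Pq G q x y.
Proof.
move=> hq x y; apply: rsum_ge0 => a; apply: Rmult_le_pos; first exact: (proj1 (hq x)).
exact: (proj1 (proj1 (proj2 HG) x a)).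
Qed.

Lemma Pq_sum1 q : is_jpolicy q -> forall x, rsum (Pq G q x) = 1.
Proof.
move=> hq x; rewrite /Pq exchange_rsum -(proj2 (hq x)); apply: eq_rsum => a.
by rewrite rsum_distrr (proj2 (proj1 (proj2 HG) x a)); ring.
Qed.

Definition bellmanq q i (v : S -> R) s :=
  rq G q i s + discount G * rsum (fun s' => Pq G q s s' * v s').

Section Policy.
Variable q : forall s, joint A s -> R.
Hypothesis hq : is_jpolicy q.

Local Notation IgPq := (IgP_app (Pq G q) (discount G)).
Local Notation resq := (res_app (Pq G q) (discount G)).

Lemma IgP_app_valueq i x : IgPq (valueq G q i) x = rq G q i x.
Proof. exact: (IgP_app_res (Pq_ge0 hq) (Pq_sum1 hq) gam_range). Qed.

Lemma IgP_app_bellmanq i w x :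
  IgPq (bellmanq q i w) x =
  rq G q i x - discount G * rsum (fun y => Pq G q x y * (bellmanq q i w y - w y)).
Proof.
rewrite (@eq_rsum _ (fun y => Pq G q x y * (bellmanq q i w y - w y))
  (fun y => Pq G q x y * bellmanq q i w y - Pq G q x y * w y)) ?rsumB => [|y]; last ring.
rewrite /IgP_app {1}/bellmanq; ring.
Qed.

Lemma valueq_fix i x : bellmanq q i (valueq G q i) x = valueq G q i x.
Proof. by have := IgP_app_valueq i x; rewrite /IgP_app /bellmanq; lra. Qed.

Lemma valueq_le i w : (forall s, bellmanq q i w s <= w s) -> forall s, valueq G q i s <= w s.
Proof.
move=> Tw_le s; suff : 0 <= w s - valueq G q i s by lra.
apply: (minimum_principle (Pq_ge0 hq) (Pq_sum1 hq) gam_range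
  (f := fun y => w y - valueq G q i y)) => x.
by rewrite IgP_appB IgP_app_valueq; have := Tw_le x; rewrite /bellmanq /IgP_app; lra.
Qed.

Lemma valueq_ge i w : (forall s, w s <= bellmanq q i w s) ->
  forall s, bellmanq q i w s <= valueq G q i s.
Proof.
move=> Tw_ge s; suff : 0 <= valueq G q i s - bellmanq q i w s by lra.
apply: (minimum_principle (Pq_ge0 hq) (Pq_sum1 hq) gam_range
  (f := fun y => valueq G q i y - bellmanq q i w y)) => x.
rewrite IgP_appB IgP_app_valueq IgP_app_bellmanq.
suff : 0 <= rsum (fun y => Pq G q x y * (bellmanq q i w y - w y)).
  by have := proj1 gam_range; nra.
by apply: rsum_ge0 => y; apply: Rmult_le_pos; [apply: Pq_ge0 | have := Tw_ge y; lra].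
Qed.

Lemma valueq_subE i v s :
  valueq G q i s - v s = resq (fun y => bellmanq q i v y - v y) s.
Proof.
rewrite -(res_app_IgP (Pq_ge0 hq) (Pq_sum1 hq) gam_range (fun y => valueq G q i y - v y)).
apply: eq_rsum => y; rewrite IgP_appB IgP_app_valueq /IgP_app /bellmanq; ring.
Qed.

End Policy.

Implicit Types pi : jstrategy A.

Definition upd pi i (sg : strategy A i) : jstrategy A :=
  fun j => match i =P j with
           | ReflectT e => eq_rect i (strategy A) sg j e
           | ReflectF _ => pi j end.
Arguments upd pi {i} sg.

Lemma upd_same pi i (sg : strategy A i) : upd pi sg i = sg.
Proof. by rewrite /upd; case: eqP => // e; rewrite (eq_irrelevance e erefl). Qed.

Lemma upd_other pi i (sg : strategy A i) j : j != i -> upd pi sg j = pi j.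
Proof. by move=> ji; rewrite /upd; case: eqP => // e; rewrite e eqxx in ji. Qed.

Lemma jprob_devprob pi i : jprob pi = devprob pi (pi i).
Proof.
apply: functional_extensionality_dep => s; apply: functional_extensionality => a.
by rewrite /jprob (bigD1 i).
Qed.

Lemma jprob_upd pi i (sg : strategy A i) : jprob (upd pi sg) = devprob pi sg.
Proof.
rewrite (jprob_devprob _ i) upd_same.
apply: functional_extensionality_dep => s; apply: functional_extensionality => a.
by rewrite /devprob; congr (_ * _); apply: eq_bigr => j ji; rewrite upd_other.
Qed.

Lemma jprob_distr pi : is_jstrategy pi -> is_jpolicy (jprob pi).
Proof.
move=> hpi s; split => [a|].
  apply: (big_ind (fun x => 0 <= x)) => [|x y|j _]; [lra | exact: Rmult_le_pos |].
  exact: (proj1 (hpi j s)).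
rewrite /rsum /jprob (@sum_prod_dffun _ (fun j => A j s) (fun j x => pi j s x)).
by apply: big1 => j _; apply: (proj2 (hpi j s)).
Qed.

Lemma upd_jstrategy pi i (sg : strategy A i) :
  is_jstrategy pi -> is_strategy sg -> is_jstrategy (upd pi sg).
Proof.
by move=> hpi hsg j; case: (eqVneq j i) => [->|ji]; [rewrite upd_same | rewrite upd_other].
Qed.

Lemma devprob_distr pi i (sg : strategy A i) :
  is_jstrategy pi -> is_strategy sg -> is_jpolicy (devprob pi sg).
Proof. by move=> hpi hsg; rewrite -jprob_upd; apply/jprob_distr/upd_jstrategy. Qed.

Definition qvalue pi i s (v : S -> R) (ai : A i s) :=
  rdev G pi ai + discount G * rsum (fun s' => Pdev G pi ai s' * v s').

Lemma rsum_dev i s (F : A i s -> joint A s -> R) :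
  rsum (fun ai => rsum (fun a : joint A s => if a i == ai then F ai a else 0)) =
  rsum (fun a : joint A s => F (a i) a).
Proof.
rewrite exchange_rsum; apply: eq_rsum => a.
rewrite /rsum (bigD1 (a i)) //= eqxx big1 ?Rplus_0_r // => ai.
by rewrite eq_sym => /negPf ->.
Qed.

Lemma rsum_devprob pi i (sg : strategy A i) s (F : joint A s -> R) :
  rsum (fun a => devprob pi sg a * F a) =
  rsum (fun ai => sg s ai * rsum (fun a : joint A s => if a i == ai then
          (\big[Rmult/1]_(j : 'I_N | j != i) pi j s (a j)) * F a else 0)).
Proof.
transitivity (rsum (fun ai => rsum (fun a : joint A s => if a i == ai then
  sg s ai * ((\big[Rmult/1]_(j : 'I_N | j != i) pi j s (a j)) * F a) else 0))).
  by rewrite rsum_dev; apply: eq_rsum => a; rewrite /devprob; ring.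
by apply: eq_rsum => ai; rewrite -rsum_distrr; apply: eq_rsum => a; case: eqP => _; ring.
Qed.

Lemma bellmanq_devprob pi i (sg : strategy A i) v s :
  bellmanq (devprob pi sg) i v s = rsum (fun ai => sg s ai * qvalue pi v ai).
Proof.
have rq_eq : rq G (devprob pi sg) i s = rsum (fun ai => sg s ai * rdev G pi ai).
  exact: rsum_devprob.
have Pv_eq : rsum (fun s' => Pq G (devprob pi sg) s s' * v s') =
              rsum (fun ai => rsum (fun s' => sg s ai * Pdev G pi ai s' * v s')).
  by rewrite exchange_rsum; apply: eq_rsum => s'; rewrite /Pq rsum_devprob -rsum_distrl.
rewrite /bellmanq rq_eq Pv_eq -rsum_distrr -rsumD; apply: eq_rsum => ai.
rewrite /qvalue (@eq_rsum _ _ (fun s' => sg s ai * (Pdev G pi ai s' * v s'))).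
  by rewrite rsum_distrr; ring.
by move=> s'; ring.
Qed.

Lemma qvalue_le_bellman_star pi i s v (ai : A i s) :
  qvalue pi v ai <= bellman_star G pi i v s.
Proof.
have [m Hm] := ex_argmax (qvalue pi v) ai.
by apply: (@le_Rsup _ (qvalue pi v m)) => [y [b ->]|]; [apply: Hm | exists ai].
Qed.

Lemma bellmanq_devprob_le_star pi i (sg : strategy A i) v s : is_strategy sg ->
  bellmanq (devprob pi sg) i v s <= bellman_star G pi i v s.
Proof.
move=> hsg; rewrite bellmanq_devprob; apply: rsum_avg_le => // ai.
exact: qvalue_le_bellman_star.
Qed.

Definition det i (d : {dffun forall s, A i s}) : strategy A i := fun s a => delta a (d s).

Lemma det_strategy i (d : {dffun forall s, A i s}) : is_strategy (det d).
Proof.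
move=> s; split => [a|]; first by rewrite /det /delta; case: eqP => _; lra.
by rewrite -(rsum_deltar (fun _ => 1) (d s)); apply: eq_rsum => a; rewrite /det; ring.
Qed.

Lemma bellmanq_det pi i (d : {dffun forall s, A i s}) v s :
  bellmanq (devprob pi (det d)) i v s = qvalue pi v (d s).
Proof.
rewrite bellmanq_devprob -(rsum_deltar (qvalue pi v) (d s)).
by apply: eq_rsum => a; rewrite /det; ring.
Qed.

Lemma ex_greedy pi i w : exists d : {dffun forall s, A i s},
  forall s (b : A i s), qvalue pi w b <= qvalue pi w (d s).
Proof.
have greedy_at s : exists a : A i s, forall b : A i s, qvalue pi w b <= qvalue pi w a.
  by case/card_gt0P: (proj1 HG i s) => a _; apply: ex_argmax a.
have [d Hd] := fin_all_exists greedy_at.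
by exists (finfun d) => s b; rewrite ffunE.
Qed.

(* Among deterministic best responses pick one maximising the total value [rsum];
   its value [w] admits no strict one-step improvement, so it is a fixed point
   of the optimal Bellman operator and dominates every stationary strategy. *)
Lemma ex_optimal_det pi i : is_jstrategy pi -> exists d : {dffun forall s, A i s},
  forall sg : strategy A i, is_strategy sg -> forall s,
    valueq G (devprob pi sg) i s <= valueq G (devprob pi (det d)) i s.
Proof.
move=> hpi.
have hdet d := devprob_distr hpi (det_strategy (i := i) d).
pose V (d : {dffun forall s, A i s}) := valueq G (devprob pi (det d)) i.
have [d0 _] := ex_greedy pi i (fun _ => 0).
have [ds ds_max] := ex_argmax (fun d => rsum (V d)) d0.
pose w := V ds.
have [dg dg_greedy] := ex_greedy pi i w.
have w_fix s : qvalue pi w (ds s) = w s by rewrite -bellmanq_det valueq_fix.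
have gain0 s : 0 <= qvalue pi w (dg s) - w s.
  by have := dg_greedy s (ds s); rewrite w_fix; lra.
have improve s : qvalue pi w (dg s) <= V dg s.
  rewrite -bellmanq_det; apply: (valueq_ge (hdet dg)) => y.
  by rewrite bellmanq_det; have := gain0 y; lra.
have gain_sum : rsum (fun s => qvalue pi w (dg s) - w s) <= 0.
  by rewrite rsumB; apply/Rle_minus/(Rle_trans _ _ _ (ler_rsum improve) (ds_max dg)).
have w_super s (b : A i s) : qvalue pi w b <= w s.
  by have /= := rsum_ge_term s gain0; have := dg_greedy s b; lra.
exists ds => sg hsg; apply: (valueq_le (devprob_distr hpi hsg)) => s.
by rewrite bellmanq_devprob; apply: rsum_avg_le => //; apply: w_super.
Qed.

Section Concentrability.
Variables (mu nu : S -> R).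
Hypothesis Hmu : is_distr mu.
Hypothesis Hnupos : forall s, 0 < nu s.

Lemma Cinf_pi_le_bound pi : is_jstrategy pi -> Cinf_pi G mu nu pi <= rsum (fun s => / nu s).
Proof.
move=> hpi; have hq := jprob_distr hpi.
have nu_inv0 s : 0 <= / nu s by apply/Rlt_le/Rinv_0_lt_compat.
apply: bigmax_le => [|y]; first exact: rsum_ge0.
apply: Rle_trans (rsum_ge_term y nu_inv0); rewrite /Rdiv -{2}(Rmult_1_l (/ nu y)).
apply: Rmult_le_compat_r => //.
have res_row s0 : (1 - discount G) * resolvent G (jprob pi) s0 y <= 1.
  have hres := res_le (Pq_ge0 hq) (Pq_sum1 hq) gam_range s0 y.
  apply: Rle_trans (Rmult_le_compat_l (1 - discount G) _ _ _ hres) _; first lra.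
  by rewrite Rinv_r; lra.
rewrite -rsum_distrr (@eq_rsum _ _ (fun s0 => mu s0 * ((1 - discount G) *
  resolvent G (jprob pi) s0 y))) => [|s0]; last ring.
exact: rsum_avg_le.
Qed.

Lemma Cinf_pi_le pi : is_jstrategy pi -> Cinf_pi G mu nu pi <= Cinf G mu nu.
Proof.
move=> hpi; apply: (@le_Rsup _ (rsum (fun s => / nu s))) => [x [pi' [hpi' ->]]|].
  exact: Cinf_pi_le_bound.
by exists pi.
Qed.

Lemma Cinf_ge0 pi : is_jstrategy pi -> 0 <= Cinf G mu nu.
Proof. by move=> hpi; apply: Rle_trans (bigmax_ge0 _) (Cinf_pi_le hpi). Qed.

Lemma mu_res_le pi y : is_jstrategy pi ->
  rsum (fun s0 => mu s0 * res (Pq G (jprob pi)) (discount G) s0 y) <=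
  Cinf G mu nu * nu y / (1 - discount G).
Proof.
move=> hpi; have := Rle_trans _ _ _ (bigmax_ge _ y) (Cinf_pi_le hpi).
set X := rsum _; move=> /= XC.
have k0 : 0 <= nu y / (1 - discount G).
  by apply: Rmult_le_pos; [apply/Rlt_le/Hnupos | apply/Rlt_le/Rinv_0_lt_compat; lra].
have -> : X = (1 - discount G) * X / nu y * (nu y / (1 - discount G)).
  by field; split; [lra | have := Hnupos y; lra].
have -> : Cinf G mu nu * nu y / (1 - discount G) = Cinf G mu nu * (nu y / (1 - discount G)).
  by rewrite /Rdiv; ring.
exact: Rmult_le_compat_r.
Qed.

Lemma res_app_norm_le q (hq : is_jpolicy q) C p (p1 : 1 < p)
  (mu_res : forall y, rsum (fun s0 => mu s0 * res (Pq G q) (discount G) s0 y) <=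
                      C * nu y / (1 - discount G))
  g (g0 : forall y, 0 <= g y) :
  rsum (fun s => mu s * rpow (res_app (Pq G q) (discount G) g s) p) <=
  rpow (/ (1 - discount G)) p * C * rsum (fun y => nu y * rpow (g y) p).
Proof.
apply: Rle_trans (res_app_rpow (Pq_ge0 hq) (Pq_sum1 hq) gam_range p1 (proj1 Hmu) g0) _.
have k0 : 0 <= / (1 - discount G) by apply/Rlt_le/Rinv_0_lt_compat; lra.
apply: Rle_trans (Rmult_le_compat_l _ _ _ (rpow_ge0 _ _) (ler_rsum (g := fun y =>
  C / (1 - discount G) * (nu y * rpow (g y) p)) _)) _.
  move=> y; apply: Rle_trans (Rmult_le_compat_r _ _ _ (rpow_ge0 _ _) (mu_res y)) _.
  by right; rewrite /Rdiv; ring.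
by rewrite rsum_distrr (rpow_pred p k0); right; rewrite /Rdiv; ring.
Qed.

End Concentrability.

Lemma brvalue_gap_le pi i v : is_jstrategy pi -> exists d : {dffun forall s, A i s},
  forall s, 0 <= brvalue G pi i s - value G pi i s <=
    res_app (Pq G (devprob pi (det d))) (discount G)
      (fun y => Rabs (bellman_star G pi i v y - v y)) s +
    res_app (Pq G (jprob pi)) (discount G) (fun y => Rabs (bellman G pi i v y - v y)) s.
Proof.
move=> hpi; have [d d_opt] := ex_optimal_det i hpi; exists d => s.
have hd := devprob_distr hpi (det_strategy d); have hp := jprob_distr hpi.
have br_eq : brvalue G pi i s = valueq G (devprob pi (det d)) i s.
  apply: Rsup_eq_lub; split => [x [sg [hsg ->]]|b ub]; first exact: d_opt.
  by apply: ub; exists (det d); split => //; apply: det_strategy.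
have value_le : value G pi i s <= valueq G (devprob pi (det d)) i s.
  by rewrite /value (jprob_devprob pi i); apply: d_opt.
have br_v : valueq G (devprob pi (det d)) i s - v s <=
            res_app (Pq G (devprob pi (det d))) (discount G)
              (fun y => Rabs (bellman_star G pi i v y - v y)) s.
  rewrite (valueq_subE hd); apply: (res_app_le (Pq_ge0 hd) (Pq_sum1 hd) gam_range) => y.
  have := bellmanq_devprob_le_star pi v y (det_strategy d).
  by have := Rle_abs (bellman_star G pi i v y - v y); lra.
have v_value : v s - value G pi i s <=
               res_app (Pq G (jprob pi)) (discount G) (fun y => Rabs (bellman G pi i v y - v y)) s.
  rewrite -[_ - _]Ropp_minus_distr /value (valueq_subE hp) -res_appN.
  apply: (res_app_le (Pq_ge0 hp) (Pq_sum1 hp) gam_range) => y.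
  by rewrite -Rabs_Ropp; apply: Rle_abs.
by rewrite br_eq; lra.
Qed.

Lemma brvalue_gap_norm_le mu nu pi i v p :
  is_distr mu -> (forall s, 0 < nu s) -> is_jstrategy pi -> 1 < p ->
  rsum (fun s => mu s * rpow (Rabs (brvalue G pi i s - value G pi i s)) p) <=
  rpow 2 (p - 1) * rpow (/ (1 - discount G)) p * Cinf G mu nu *
  (rsum (fun s => nu s * rpow (Rabs (bellman_star G pi i v s - v s)) p) +
   rsum (fun s => nu s * rpow (Rabs (bellman G pi i v s - v s)) p)).
Proof.
move=> Hmu Hnupos hpi p1.
have [d gap] := brvalue_gap_le i v hpi.
have hd := devprob_distr hpi (det_strategy d); have hp := jprob_distr hpi.
set a := res_app _ _ (fun y => Rabs (bellman_star G pi i v y - v y)) in gap.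
set b := res_app _ _ (fun y => Rabs (bellman G pi i v y - v y)) in gap.
have a0 s : 0 <= a s.
  by apply: (res_app_ge0 (Pq_ge0 hd) (Pq_sum1 hd) gam_range) => y; apply: Rabs_pos.
have b0 s : 0 <= b s.
  by apply: (res_app_ge0 (Pq_ge0 hp) (Pq_sum1 hp) gam_range) => y; apply: Rabs_pos.
have gap_p s : mu s * rpow (Rabs (brvalue G pi i s - value G pi i s)) p <=
               rpow 2 (p - 1) * (mu s * rpow (a s) p + mu s * rpow (b s) p).
  rewrite (_ : _ * (_ + _) = mu s * (rpow 2 (p - 1) * (rpow (a s) p + rpow (b s) p))); last ring.
  apply/Rmult_le_compat_l; first exact: (proj1 Hmu).
  apply: Rle_trans (rpowD_le p1 (a0 s) (b0 s)); apply: ler_rpow; last lra.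
  by have gs := gap s; rewrite Rabs_right //; lra.
have mu_res_d y := mu_res_le Hmu Hnupos y (upd_jstrategy hpi (det_strategy d)).
rewrite jprob_upd in mu_res_d.
have K1 := res_app_norm_le Hmu hd p1 mu_res_d
  (g := fun y => Rabs (bellman_star G pi i v y - v y)) (fun y => Rabs_pos _).
have K2 := res_app_norm_le Hmu hp p1 (fun y => mu_res_le Hmu Hnupos y hpi)
  (g := fun y => Rabs (bellman G pi i v y - v y)) (fun y => Rabs_pos _).
apply: Rle_trans (ler_rsum gap_p) _; rewrite rsum_distrr rsumD !Rmult_assoc.
apply: Rmult_le_compat_l; first exact: rpow_ge0.
by apply: Rle_trans (Rplus_le_compat _ _ _ _ K1 K2) (Req_le _ _ _); ring.
Qed.

End Game.

Theorem theorem1 (N : nat) (S : finType) (A : 'I_N -> S -> finType)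
  (G : game N S A) (HG : valid_game G)
  (p p' : R) (Hp : 1 < p) (Hp' : 1 < p') (Hpp' : 1 / p + 1 / p' = 1)
  (mu nu : S -> R) (Hmu : is_distr mu) (Hnu : is_distr nu) (Hnupos : forall s, 0 < nu s)
  (rho : 'I_N -> R) (Hrho : is_distr rho)
  (pi : jstrategy A) (Hpi : is_jstrategy pi)
  (v : 'I_N -> S -> R) :
  rpow (rsum (fun i => rho i *
          rpow (pnorm mu p (fun s => brvalue G pi i s - value G pi i s)) p)) (1 / p)
  <= rpow 2 (1 / p') * rpow (Cinf G mu nu) (1 / p) / (1 - discount G) *
     rpow (rsum (fun i => rho i *
          (rpow (pnorm nu p (fun s => bellman_star G pi i (v i) s - v i s)) p +
           rpow (pnorm nu p (fun s => bellman G pi i (v i) s - v i s)) p))) (1 / p).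
Proof.
have [rho0 _] := Hrho; have [mu0 _] := Hmu; have [nu0 _] := Hnu.
have p0 : 0 < p by lra.
apply: (rpow_conj_bound Hp Hpp').
- by apply: rsum_ge0 => i; apply/Rmult_le_pos/rpow_ge0.
- exact: (Cinf_ge0 HG Hmu Hnupos Hpi).
- by apply: rsum_ge0 => i; apply/Rmult_le_pos/Rplus_le_le_0_compat; try apply: rpow_ge0.
- by apply/Rlt_le/Rinv_0_lt_compat; have := proj2 (proj2 HG); lra.
rewrite -rsum_distrr; apply: ler_rsum => i; rewrite !pnorm_pow //.
apply: Rle_trans (Rmult_le_compat_l _ _ _ (rho0 i)
  (brvalue_gap_norm_le HG i (v i) Hmu Hnupos Hpi Hp)) (Req_le _ _ _).
ring.
Qed.
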